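(* Let $n\ge 2$, let $\psi\in\mathrm{Aut}(F_n)$, let $\Gamma=F_n/K$ be a finite characteristic quotient of $F_n$, and let $(X,x_1)\to(R_n,* )$ be the associated finite based cover, so that $\pi_1(X,x_1)\cong K$. If the automorphism of $\Gamma$ induced by $\psi$ is not the identity, then the automorphism of $H_1(X,\mathbb{Z})$ induced by $\psi$ is not the identity.
   Context: $F_n$ is the free group of rank $n\ge2$ with a fixed free basis $x_1,\dots,x_n$, identified with $\pi_1(R_n,* )$, where $R_n$ is the wedge of $n$ circles with wedge point $*$. A subgroup $K\le F_n$ is characteristic if $\psi(K)=K$ for all $\psi\in\mathrm{Aut}(F_n)$; then $\Gamma=F_n/K$ is a characteristic quotient and every $\psi\in\mathrm{Aut}(F_n)$ induces an automorphism of $\Gamma$. The based cover associated to a finite-index subgroup $K$ is the connected covering $p:(X,x_1)\to(R_n,* )$ with $p_*\pi_1(X,x_1)=K$; its deck group is $\Gamma$. The action of $\psi$ on $H_1(X,\mathbb{Z})$ is the automorphism of $K^{ab}\cong H_1(X,\mathbb{Z})$ induced by the restriction $\psi|_K:K\to K$ (equivalently, induced by the basepoint-preserving lift to $X$ of a based homotopy equivalence of $R_n$ realizing $\psi$). *)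

From HB Require Import structures.
From mathcomp Require Import all_boot.
Set Implicit Arguments. Unset Strict Implicit. Unset Printing Implicit Defensive.

Section FreeGroup.
Variable n : nat.

(* a letter (i, false) stands for x_i, (i, true) for x_i^-1 *)
Definition letter := ('I_n * bool)%type.
Definition linv (a : letter) : letter := (a.1, ~~ a.2).

Definition reduced (w : seq letter) : bool :=
  sorted (fun a b => b != linv a) w.

Definition push (a : letter) (w : seq letter) : seq letter :=
  if w is b :: w' then (if b == linv a then w' else a :: w) else [:: a].

Definition freduce (w : seq letter) : seq letter := foldr push [::] w.

Lemma reduced_push a w : reduced w -> reduced (push a w).
Proof.
case: w => [|b w] //= Hw; case: ifP => Hb.
  by case: w Hw => //= c w /andP[].
by rewrite /reduced /= Hb.
Qed.

Lemma reduced_freduce w : reduced (freduce w).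
Proof. by elim: w => //= a w IH; apply: reduced_push. Qed.

Record FG := MkFG { fgword :> seq letter; _ : reduced fgword }.
HB.instance Definition _ := [isSub for fgword].
HB.instance Definition _ := [Equality of FG by <:].

Definition fg_of (w : seq letter) : FG := MkFG (reduced_freduce w).
Definition fg1 : FG := fg_of [::].
Definition fgmul (u v : FG) : FG := fg_of (fgword u ++ fgword v).
Definition fginv (u : FG) : FG := fg_of (rev (map linv (fgword u))).
Definition fggen (i : 'I_n) : FG := fg_of [:: (i, false)].
Definition fgcomm (a b : FG) : FG := fgmul (fgmul (fginv a) (fginv b)) (fgmul a b).

Definition is_aut (psi : FG -> FG) : Prop :=
  (forall u v, psi (fgmul u v) = fgmul (psi u) (psi v)) /\ bijective psi.

Definition is_subgroup (K : FG -> Prop) : Prop :=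
  [/\ K fg1, (forall u v, K u -> K v -> K (fgmul u v)) & (forall u, K u -> K (fginv u))].

Definition finite_index (K : FG -> Prop) : Prop :=
  exists s : seq FG, forall g, exists2 r, r \in s & K (fgmul (fginv r) g).

Definition characteristic (K : FG -> Prop) : Prop :=
  forall phi, is_aut phi -> forall h, K h <-> exists g, K g /\ phi g = h.

Inductive gen_sub (S : FG -> Prop) : FG -> Prop :=
  | gen_one : gen_sub S fg1
  | gen_in u : S u -> gen_sub S u
  | gen_mul u v : gen_sub S u -> gen_sub S v -> gen_sub S (fgmul u v)
  | gen_inv u : gen_sub S u -> gen_sub S (fginv u).

Definition comm_sub (K : FG -> Prop) : FG -> Prop :=
  gen_sub (fun c => exists a b, [/\ K a, K b & c = fgcomm a b]).

(* psi induces the identity on Gamma = F_n / K:  psi(g) K = g K for all g *)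
Definition induced_id_quotient (psi : FG -> FG) (K : FG -> Prop) : Prop :=
  forall g, K (fgmul (fginv g) (psi g)).

(* psi|_K induces the identity on K^ab = K / [K,K] (= H_1(X, Z)):
   psi(k) [K,K] = k [K,K] for all k in K *)
Definition induced_id_abelianization (psi : FG -> FG) (K : FG -> Prop) : Prop :=
  forall k, K k -> comm_sub K (fgmul (fginv k) (psi k)).

End FreeGroup.

From HB Require Import structures.
From mathcomp Require Import all_boot fingroup zify boolp.
From Stdlib Require Import ZArith Lia.
Set Implicit Arguments. Unset Strict Implicit. Unset Printing Implicit Defensive.

(* X is the Schreier graph of K: its vertices are the cosets xK, and each coset v
   has, for every basis letter x_i, an edge (v, i) from v to v x_i.  Reading a word
   from a base point lifts it to an edge path; its signed edge count depends only on
   the group element, and for k in K it is the 1-cycle of the loop k.  The map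
   k |-> cycle of k is additive on K, so it kills [K, K] and factors through
   H_1(X, Z).  Conjugating k by g translates its cycle by the deck transformation g,
   so if psi acts trivially on H_1(X, Z), every cycle is invariant under the deck
   transformation h = g^-1 psi(g).  If psi is not the identity on F_n / K, some such
   h lies outside K and hence fixes no vertex.  A spanning tree has fewer edges than
   there are vertices, whereas X has n >= 2 edges per vertex, so some edge e and its
   translate h e both lie outside the tree; the fundamental cycle of e is 1 on e and
   0 on h e, a contradiction. *)

Section FreeReduction.
Variable n : nat.
Implicit Types (a : letter n) (u v w : seq (letter n)).

Lemma linvK : involutive (@linv n).
Proof. by case=> i b; rewrite /linv /= negbK. Qed.

Lemma freduce_id w : reduced w -> freduce w = w.
Proof.
elim: w => //= a w IH Hw; rewrite IH; last exact: path_sorted Hw.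
by case: w Hw {IH} => [|b w] //= /andP[/negbTE->].
Qed.

Lemma push_cancel a w : reduced w -> push (linv a) (push a w) = w.
Proof.
case: w => [|b w] /=; first by rewrite linvK eqxx.
case: ifP => [/eqP-> | _ _]; last by rewrite /= linvK eqxx.
by case: w => [|c w] //= /andP[Hc _]; rewrite linvK in Hc *; rewrite (negbTE Hc).
Qed.

Lemma reduced_foldr_push w u : reduced w -> reduced (foldr (@push n) w u).
Proof. by move=> Hw; elim: u => //= a u; apply: reduced_push. Qed.

Lemma foldr_push_freduce u w : reduced w ->
  foldr (@push n) w (freduce u) = foldr (@push n) w u.
Proof.
move=> Hw; elim: u => //= a u <-.
case: (freduce u) (reduced_freduce u) => [|b t] //= Ht.
case: ifP => //= /eqP->.
by rewrite -{1}(linvK a) push_cancel // reduced_foldr_push.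
Qed.

Lemma freduce_cat u v : freduce (u ++ v) = foldr (@push n) (freduce v) u.
Proof. exact: foldr_cat. Qed.

Lemma freduce_catl u v : freduce (freduce u ++ v) = freduce (u ++ v).
Proof. by rewrite !freduce_cat foldr_push_freduce // reduced_freduce. Qed.

Lemma freduce_catr u v : freduce (u ++ freduce v) = freduce (u ++ v).
Proof. by rewrite !freduce_cat freduce_id // reduced_freduce. Qed.

Lemma freduce_invl u v : freduce (rev (map (@linv n) u) ++ u ++ v) = freduce v.
Proof.
elim: u v => //= a u IH v.
rewrite rev_cons -cats1 -catA /= -freduce_catr /= push_cancel ?reduced_freduce //.
by rewrite freduce_catr IH.
Qed.

Lemma rev_map_linvK u : rev (map (@linv n) (rev (map (@linv n) u))) = u.
Proof. by rewrite map_rev revK -map_comp (eq_map linvK) map_id. Qed.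

End FreeReduction.

Section FreeGroupLaws.
Variable n : nat.
Implicit Types (x y z : FG n).

Lemma fg_of_word x : fg_of (fgword x) = x.
Proof. by case: x => w Hw; apply: val_inj; exact: freduce_id. Qed.

Lemma fgmulA : associative (@fgmul n).
Proof. by move=> x y z; apply: val_inj; rewrite /= freduce_catr freduce_catl catA. Qed.

Lemma fgmul1l : left_id (fg1 n) (@fgmul n).
Proof. by move=> x; rewrite /fgmul fg_of_word. Qed.

Lemma fgmul1r : right_id (fg1 n) (@fgmul n).
Proof. by move=> x; rewrite /fgmul cats0 fg_of_word. Qed.

Lemma fgmulVl : left_inverse (fg1 n) (@fginv n) (@fgmul n).
Proof.
move=> x; apply: val_inj; rewrite /= freduce_catl.
by have := freduce_invl (fgword x) [::]; rewrite cats0.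
Qed.

Lemma fgmulVr : right_inverse (fg1 n) (@fginv n) (@fgmul n).
Proof.
move=> x; apply: val_inj; rewrite /= freduce_catr.
by have := freduce_invl (rev (map (@linv n) (fgword x))) [::]; rewrite rev_map_linvK cats0.
Qed.

End FreeGroupLaws.

HB.instance Definition _ n := [Choice of FG n by <:].
HB.instance Definition _ n :=
  isGroup.Build (FG n) (@fgmulA n) (@fgmul1l n) (@fgmul1r n) (@fgmulVl n) (@fgmulVr n).

Local Open Scope group_scope.

Definition fglet n (a : letter n) : FG n := fg_of [:: a].

Lemma fg_of_nil n : fg_of [::] = 1 :> FG n.
Proof. by []. Qed.

Lemma fg_of_cat n (u v : seq (letter n)) : fg_of (u ++ v) = fg_of u * fg_of v.
Proof. by apply: val_inj; rewrite /= freduce_catl freduce_catr. Qed.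

Lemma fglet_linv n (a : letter n) : fglet (linv a) = (fglet a)^-1.
Proof. by apply/esym/mulg1_eq/val_inj; rewrite /= eqxx. Qed.

Section EdgeChains.
Local Open Scope Z_scope.
Local Open Scope group_scope.
Variables (n : nat) (T : eqType) (lab : FG n -> T).
Implicit Types (p x y : FG n) (a : letter n) (w : seq (letter n)) (e : T * 'I_n).

(* Reading the letter a at p crosses the edge (lab p, i) forwards if a = x_i, and
   the edge (lab (p x_i^-1), i) backwards if a = x_i^-1.  [chain p x e] counts the
   signed crossings of e by the path that reads the reduced word of x from p. *)
Definition letter_edge p a : T * 'I_n := (lab (if a.2 then p * fglet a else p), a.1).
Definition letter_sign a : Z := if a.2 then (-1)%Z else 1%Z.
Definition letter_chain p a e : Z := if e == letter_edge p a then letter_sign a else 0.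

Fixpoint walk_chain p w e : Z :=
  if w is a :: w' then letter_chain p a e + walk_chain (p * fglet a) w' e else 0.

Definition chain p x e : Z := walk_chain p (fgword x) e.

Lemma walk_chain_cat p u v e :
  walk_chain p (u ++ v) e = walk_chain p u e + walk_chain (p * fg_of u) v e.
Proof.
elim: u p => [|a u IH] p /=; first by rewrite fg_of_nil mulg1.
by rewrite IH -[a :: u]/([:: a] ++ u) fg_of_cat mulgA Z.add_assoc.
Qed.

Lemma letter_chain_cancel p a e :
  letter_chain p a e + letter_chain (p * fglet a) (linv a) e = 0.
Proof.
rewrite /letter_chain /letter_edge fglet_linv mulgK.
by case: a => i [] /=; case: eqP.
Qed.

Lemma walk_chain_freduce p w e : walk_chain p (freduce w) e = walk_chain p w e.
Proof.
elim: w p => //= a w IH p; rewrite -IH.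
case: (freduce w) => [|b w'] //=; case: ifP => //= /eqP->.
by rewrite fglet_linv mulgK; have := letter_chain_cancel p a e; lia.
Qed.

Lemma chainM p x y e : chain p (x * y) e = chain p x e + chain (p * x) y e.
Proof. by rewrite /chain walk_chain_freduce walk_chain_cat fg_of_word. Qed.

Lemma chainV p x e : chain p x^-1 e = - chain (p * x^-1) x e.
Proof. by have := chainM p x^-1 x e; rewrite mulVg /chain /=; lia. Qed.

Lemma chain_fglet p a e : chain p (fglet a) e = letter_chain p a e.
Proof. by rewrite /chain /= Z.add_0_r. Qed.

End EdgeChains.

Section CosetChains.
Local Open Scope Z_scope.
Local Open Scope group_scope.
Variables (n : nat) (K : FG n -> Prop) (T : eqType) (lab : FG n -> T).
Hypothesis labP : forall x y, lab x = lab y <-> K (x^-1 * y).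
Hypothesis Knormal : forall y k, K k -> K (k ^ y).
Implicit Types (p q x y z k : FG n) (a : letter n) (e : T * 'I_n).

Lemma lab_mull x y z : (lab (z * x) == lab (z * y)) = (lab x == lab y).
Proof.
have E : (z * x)^-1 * (z * y) = x^-1 * y.
  by rewrite invMg -mulgA mulKg.
by apply/eqP/eqP => /labP H; apply/labP; rewrite E in H *.
Qed.

Lemma lab_mulr x y z : lab x = lab y -> lab (x * z) = lab (y * z).
Proof.
move=> /labP/(Knormal z); rewrite conjgE -!mulgA => H.
by apply/labP; rewrite invMg -!mulgA.
Qed.

Lemma lab1P k : lab k = lab 1 <-> K k.
Proof. by have := labP 1 k; rewrite invg1 mul1g => H; split=> [/esym/H | /H/esym]. Qed.

Lemma K_mul x y : K x -> K y -> K (x * y).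
Proof.
move=> /lab1P Hx /lab1P Hy; apply/lab1P; rewrite -Hx -{2}(mulg1 x).
by apply/eqP; rewrite lab_mull Hy.
Qed.

Lemma K_inv x : K x -> K x^-1.
Proof.
move=> /lab1P Hx; apply/lab1P; rewrite -(mulg1 x^-1) -{2}(mulVg x).
by apply/eqP; rewrite lab_mull Hx.
Qed.

Lemma K_div x y : lab x = lab y -> K (x * y^-1).
Proof. by move=> /esym/labP/(Knormal y^-1); rewrite conjgE invgK -mulgA mulKVg. Qed.

Lemma lab_fixP h x : lab (h * x) = lab x <-> K h.
Proof.
rewrite labP invMg -mulgA -[x^-1 * _]/(h^-1 ^ x).
split=> [/(Knormal x^-1) | /K_inv/(Knormal x)]; last by [].
by rewrite -conjgM mulgV conjg1 => /K_inv; rewrite invgK.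
Qed.

Lemma walk_chain_lab p q w e :
  lab p = lab q -> walk_chain lab p w e = walk_chain lab q w e.
Proof.
elim: w p q => //= a w IH p q Epq.
rewrite (IH _ (q * fglet a)); last exact: lab_mulr.
by rewrite /letter_chain /letter_edge; case: (a.2); rewrite ?(lab_mulr (fglet a) Epq) ?Epq.
Qed.

Lemma chain_lab p q x e : lab p = lab q -> chain lab p x e = chain lab q x e.
Proof. exact: walk_chain_lab. Qed.

Lemma chain_mull y p x z i :
  chain lab (y * p) x (lab z, i) = chain lab p x (lab (y^-1 * z), i).
Proof.
rewrite /chain; elim: (fgword x) p => //= a w IH p; rewrite -mulgA IH.
congr (_ + _); rewrite /letter_chain /letter_edge -mulgA !xpair_eqE.
by case: (a.2); rewrite -{1}(mulKVg y z) lab_mull.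
Qed.

Definition loop_chain k e : Z := chain lab 1 k e.

Lemma loop_chainM k x e : K k -> loop_chain (k * x) e = loop_chain k e + loop_chain x e.
Proof.
move=> /lab1P Hk.
by rewrite /loop_chain chainM (chain_lab _ _ (_ : lab (1 * k) = lab 1)) ?mul1g.
Qed.

Lemma loop_chainV k e : K k -> loop_chain k^-1 e = - loop_chain k e.
Proof.
move=> /K_inv/lab1P Hk.
by rewrite /loop_chain chainV (chain_lab _ _ (_ : lab (1 * k^-1) = lab 1)) ?mul1g.
Qed.

Lemma comm_sub_loop_chain z : comm_sub K z -> K z /\ forall e, loop_chain z e = 0.
Proof.
elim=> {z} [| _ [a [b [Ka Kb ->]]] | x y _ [Kx Cx] _ [Ky Cy] | x _ [Kx Cx]].
- by split=> [|e]; [apply/lab1P | rewrite /loop_chain /chain].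
- have Kab : K (a^-1 * b^-1) by apply: K_mul; apply: K_inv.
  split=> [|e]; first by apply: K_mul => //; apply: K_mul.
  by rewrite /fgcomm !loop_chainM ?loop_chainV //; [lia | apply: K_inv].
- by split=> [|e]; [apply: K_mul | rewrite loop_chainM // Cx Cy].
- by split=> [|e]; [apply: K_inv | rewrite loop_chainV // Cx].
Qed.

Lemma loop_chain_conj k y x i :
  K k -> loop_chain (k ^ y) (lab x, i) = loop_chain k (lab (y * x), i).
Proof.
move=> /lab1P Hk; have Hyk : lab (y^-1 * k) = lab y^-1.
  by rewrite -{2}[y^-1]mulg1; apply/eqP; rewrite lab_mull Hk.
rewrite /loop_chain conjgE !chainM chainV !mul1g (chain_lab _ _ Hyk).
rewrite -{2}[y^-1]mulg1 chain_mull invgK.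
by rewrite Z.add_comm -Z.add_assoc Z.add_opp_diag_r Z.add_0_r.
Qed.

Variable psi : FG n -> FG n.
Hypothesis psiM : {morph psi : x y / x * y}.
Hypothesis psiK : forall k, K k -> K (psi k).
Hypothesis psi_ab : induced_id_abelianization psi K.

Lemma psi1 : psi 1 = 1.
Proof. by apply: (mulIg (psi 1)); rewrite -psiM !mul1g. Qed.

Lemma psiV x : psi x^-1 = (psi x)^-1.
Proof. by apply/esym/mulg1_eq; rewrite -psiM mulgV psi1. Qed.

Lemma psiJ k y : psi (k ^ y) = psi k ^ psi y.
Proof. by rewrite !conjgE !psiM psiV. Qed.

Lemma loop_chain_psi k e : K k -> loop_chain (psi k) e = loop_chain k e.
Proof.
move=> Kk; have [_ /(_ e)] := comm_sub_loop_chain (psi_ab Kk).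
by rewrite loop_chainM ?loop_chainV //; [lia | apply: K_inv].
Qed.

Lemma loop_chain_deck_invariant g k x i :
  K k -> loop_chain k (lab (g^-1 * psi g * x), i) = loop_chain k (lab x, i).
Proof.
move=> Kk; have := loop_chain_psi (lab (psi g * x), i) (Knormal g^-1 Kk).
rewrite psiJ psiV !loop_chain_conj //; last exact: psiK.
by rewrite mulKg mulgA loop_chain_psi.
Qed.

End CosetChains.

Lemma exists_notin_with_image_notin (A : finType) (f : A -> A) (E : {set A}) :
  injective f -> 2 * #|E| < #|A| -> exists x, x \notin E /\ f x \notin E.
Proof.
move=> f_inj cardE.
have [/existsP[x /andP[xE fxE]] | /existsPn none] :=
  boolP [exists x, (x \notin E) && (f x \notin E)]; first by exists x.
have : f @: (~: E) \subset E.
  by apply/subsetP=> _ /imsetP[x xE ->]; move: (none x); rewrite -in_setC xE /= negbK.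
move/subset_leq_card; rewrite card_imset // => cardCE.
by have := cardsC E; lia.
Qed.

Section SpanningTree.
Variables (n : nat) (K : FG n -> Prop) (T : finType) (lab : FG n -> T).
Hypothesis labP : forall x y, lab x = lab y <-> K (x^-1 * y).
Hypothesis Knormal : forall y k, K k -> K (k ^ y).
Hypothesis lab_surj : forall t, exists x, lab x = t.
Implicit Types (S : {set T}) (E : {set T * 'I_n}) (P : T -> FG n).

(* E is a spanning tree of the vertices S, with P v a path from lab 1 to v that uses
   only edges of E. *)
Definition spanning S E P : Prop :=
  [/\ #|E| < #|S|, {in S, forall v, lab (P v) = v}
    & {in S, forall v e, e \notin E -> chain lab 1 (P v) e = 0%Z}].

Lemma spanning_base : spanning [set lab 1] set0 (fun=> 1).
Proof. by split=> [| v /set1P-> | ]; rewrite ?cards0 ?cards1. Qed.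

Lemma spanning_grow S E P v a (u := lab (P v * fglet a)) :
  spanning S E P -> v \in S -> u \notin S ->
  spanning (u |: S) (letter_edge lab (P v) a |: E)
    (fun w => if w == u then P v * fglet a else P w).
Proof.
case=> cardE HP HC vS uS; split.
- by rewrite !cardsU1 uS; case: (_ \notin E); rewrite /= ?ltn_add2l // ltnS ltnW.
- move=> w; case: eqP => [-> // | neq /setU1P[//|]]; exact: HP.
- move=> w; case: eqP => [_ _ | neq /setU1P[//|wS]] e;
    rewrite in_setU1 negb_or => /andP[ne eE].
    rewrite chainM (HC v vS e eE) mul1g chain_fglet /letter_chain.
    by rewrite (negbTE ne).
  exact: HC.
Qed.

Lemma spanning_full S E P :
  spanning S E P -> lab 1 \in S ->
  (forall v a, v \in S -> lab (P v * fglet a) \in S) -> S = setT.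
Proof.
case=> _ HP _ S1 closed; apply/setP=> t; rewrite inE.
have [x <-] := lab_surj t; rewrite -(fg_of_word x).
elim/last_ind: (fgword x) => [// | w a wS].
rewrite -cats1 fg_of_cat (lab_mulr labP Knormal _ (esym (HP _ wS))).
exact: closed.
Qed.

Lemma spanning_tree_exists : exists E P, spanning setT E P.
Proof.
have [m] := ubnP #|~: [set lab 1]|.
elim: m [set lab 1] set0 (fun=> 1) (set11 (lab 1)) spanning_base => // m IH S E P S1 span.
have [/existsP[v /andP[vS /existsP[a uS]]] | /existsPn closed] :=
  boolP [exists v in S, exists a, lab (P v * fglet a) \notin S].
  have ltCS : #|~: (lab (P v * fglet a) |: S)| < #|~: S|.
    apply: proper_card; rewrite properC; apply/properP; split; first exact: subsetUr.
    by exists (lab (P v * fglet a)); rewrite ?setU11.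
  move=> ltSm; apply: (IH _ _ _ _ (spanning_grow span vS uS)); first exact: setU1r.
  exact: leq_trans ltCS (ltnSE ltSm).
move=> _; exists E, P; rewrite -(spanning_full span S1) // => v a vS.
by apply: contraT => uS; case/negP: (closed v); rewrite vS; apply/existsP; exists a.
Qed.

Definition tree_loop P v a : FG n := P v * fglet a * (P (lab (P v * fglet a)))^-1.

Lemma K_tree_loop E P v a : spanning setT E P -> K (tree_loop P v a).
Proof. by case=> _ HP _; apply: (K_div labP Knormal); rewrite HP ?inE. Qed.

Lemma loop_chain_tree_loop E P v a e : spanning setT E P -> e \notin E ->
  loop_chain lab (tree_loop P v a) e = letter_chain lab (P v) a e.
Proof.
move=> span eE; have [_ HP HC] := span.
have back : lab (tree_loop P v a) = lab 1 by apply/(lab1P labP); exact: K_tree_loop span.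
rewrite /loop_chain {1}/tree_loop !chainM chainV !mul1g -/(tree_loop P v a).
by rewrite (chain_lab labP Knormal _ _ back) chain_fglet !HC ?inE //; lia.
Qed.

Lemma deck_moves_loop_chain h : 1 < n -> ~ K h ->
  exists k x i, K k /\ loop_chain lab k (lab (h * x), i) <> loop_chain lab k (lab x, i).
Proof.
move=> n_gt1 Kh; have [E [P span]] := spanning_tree_exists; have [cardE HP _] := span.
pose f (e : T * 'I_n) := (lab (h * P e.1), e.2).
have f_inj : injective f.
  move=> [v i] [w j] [/eqP]; rewrite (lab_mull labP) => /eqP Evw ->.
  by rewrite -(HP v) ?inE // -(HP w) ?inE // Evw.
have [[v i] [eE feE]] : exists e, e \notin E /\ f e \notin E.
  have cardTn : 2 * #|T| <= #|{: T * 'I_n}|.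
    by rewrite card_prod card_ord mulnC leq_mul2l n_gt1 orbT.
  apply: exists_notin_with_image_notin f_inj (leq_trans _ cardTn).
  by rewrite ltn_pmul2l // -cardsT.
exists (tree_loop P v (i, false)), (P v), i; split; first exact: K_tree_loop span.
have PvE : (lab (P v), i) \notin E by rewrite HP ?inE.
rewrite !(loop_chain_tree_loop _ _ span) // /letter_chain /letter_edge /= eqxx.
by case: eqP => [[/(lab_fixP labP Knormal)] | ].
Qed.

End SpanningTree.

Section CosetLabelling.
Variables (n : nat) (K : FG n -> Prop) (s : seq (FG n)).
Hypothesis Ksub : is_subgroup K.
Hypothesis s_cover : forall g, exists2 r, r \in s & K (r^-1 * g).

Let Kmul x y : K x -> K y -> K (x * y). Proof. by case: Ksub => _ + _; apply. Qed.
Let Kinv x : K x -> K x^-1. Proof. by case: Ksub => _ _; apply. Qed.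

Definition coset_index (x : FG n) : nat := find (fun r => `[< K (r^-1 * x) >]) s.

Let has_coset x : has (fun r => `[< K (r^-1 * x) >]) s.
Proof. by have [r rs Kr] := s_cover x; apply/hasP; exists r => //; apply/asboolP. Qed.

Lemma coset_index_lt x : coset_index x < size s.
Proof. by rewrite -has_find. Qed.

Lemma coset_indexP x y : coset_index x = coset_index y <-> K (x^-1 * y).
Proof.
split=> [Exy | Kxy].
  have /asboolP Kx := nth_find 1 (has_coset x).
  have /asboolP := nth_find 1 (has_coset y); rewrite -/(coset_index y) -Exy.
  by move/(Kmul (Kinv Kx)); rewrite invMg invgK -mulgA mulKVg.
apply: eq_find => r; apply: asbool_equiv_eq; split=> Kr.
  by rewrite -[y](mulKVg x) mulgA; apply: Kmul.
rewrite -[x](mulKVg y) mulgA -[y^-1 * x]invgK invMg invgK.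
by apply: Kmul => //; apply: Kinv.
Qed.

Definition coset_rep (j : nat) : FG n := nth 1 s j.

Lemma coset_index_rep x : coset_index (coset_rep (coset_index x)) = coset_index x.
Proof. by apply/coset_indexP; have /asboolP := nth_find 1 (has_coset x). Qed.

(* The vertices of X: the positions in s holding the first representative of their
   coset, so that [coset_of] is onto. *)
Definition coset := {j : 'I_(size s) | coset_index (coset_rep j) == j}.

Definition coset_of x : coset :=
  exist _ (Ordinal (coset_index_lt x)) (introT eqP (coset_index_rep x)).

Lemma coset_ofP x y : coset_of x = coset_of y <-> K (x^-1 * y).
Proof.
rewrite -coset_indexP; split=> [/(congr1 (val \o val)) // | Exy].
by do 2!apply: val_inj.
Qed.

Lemma coset_of_surj (t : coset) : exists x, coset_of x = t.
Proof. by exists (coset_rep (val t)); do 2!apply: val_inj; exact/eqP/(valP t). Qed.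

End CosetLabelling.

Lemma characteristic_normal n (K : FG n -> Prop) :
  characteristic K -> forall y k, K k -> K (k ^ y).
Proof.
move=> Kchar y k Kk; apply/(Kchar (conjg^~ y)); last by exists k.
split; first by move=> u v; exact: conjMg u v y.
by exists (conjg^~ y^-1); [exact: conjgK | exact: conjgKV].
Qed.

Theorem proposition1p1 (n : nat) (hn : 2 <= n) (psi : FG n -> FG n)
  (K : FG n -> Prop) :
  is_aut psi -> is_subgroup K -> finite_index K -> characteristic K ->
  ~ induced_id_quotient psi K ->
  ~ induced_id_abelianization psi K.
Proof.
move=> psi_aut Ksub [s s_cover] Kchar psi_nontriv psi_ab.
have Knormal := characteristic_normal Kchar.
have psiK k : K k -> K (psi k) by move=> Kk; apply/(Kchar _ psi_aut); exists k.
have labP := coset_ofP Ksub s_cover.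
have [g Kg] : exists g, ~ K (g^-1 * psi g) by apply/existsNP.
have [k [x [i [Kk]]]] := deck_moves_loop_chain labP Knormal (coset_of_surj Ksub s_cover) hn Kg.
by rewrite (loop_chain_deck_invariant labP Knormal psi_aut.1 psiK psi_ab).
Qed.
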